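(* Let $\mathbf{u}$ be a $C^1$ unit vector field on $\mathbb{R}^2$ whose integral curves are straight lines, i.e. $\mathbf{u}(\mathbf{x}+t\mathbf{u}(\mathbf{x}))=\mathbf{u}(\mathbf{x})$ for all $\mathbf{x}$ and $t\ge0$. Let $\mathbf{f}\in C^2_c(S^1;\mathbb{D})$. Then: (i) $\mathcal{L}_0\mathbf{f}=0$ if and only if $\mathbf{f}=\varphi\,\mathbf{u}^\perp$ for some $\varphi\in C_c^2(\mathbb{D})$; (ii) $\mathcal{T}_0\mathbf{f}=0$ if and only if $\mathbf{f}=\varphi\,\mathbf{u}$ for some $\varphi\in C_c^2(\mathbb{D})$.
   Context: $\mathbb{D}$ is the open unit disc in $\mathbb{R}^2$; $C_c^2(S^1;\mathbb{D})$ is the space of twice continuously differentiable vector fields $\mathbb{R}^2\to\mathbb{R}^2$ with compact support in $\mathbb{D}$, and $C_c^2(\mathbb{D})$ the analogous scalar space. For $\mathbf{a}=(a_1,a_2)$, $\mathbf{a}^\perp=(-a_2,a_1)$. The longitudinal and transverse divergent beam transforms are $\mathcal{L}_0\mathbf{f}(\mathbf{x})=-\int_0^\infty \mathbf{u}(\mathbf{x})\cdot\mathbf{f}(\mathbf{x}+t\mathbf{u}(\mathbf{x}))\,dt$ and $\mathcal{T}_0\mathbf{f}(\mathbf{x})=-\int_0^\infty \mathbf{u}^\perp(\mathbf{x})\cdot\mathbf{f}(\mathbf{x}+t\mathbf{u}(\mathbf{x}))\,dt$. *)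

From Stdlib Require Import Reals.
From Coquelicot Require Import Coquelicot.
Open Scope R_scope.

Definition vec2 := (R * R)%type.

Definition vadd (a b : vec2) : vec2 := (fst a + fst b, snd a + snd b).
Definition vscal (t : R) (a : vec2) : vec2 := (t * fst a, t * snd a).
Definition vdot (a b : vec2) : R := fst a * fst b + snd a * snd b.
Definition vperp (a : vec2) : vec2 := (- snd a, fst a).
Definition vnorm (a : vec2) : R := sqrt (vdot a a).

Definition d1 (g : vec2 -> R) (p : vec2) : R := Derive (fun s => g (s, snd p)) (fst p).
Definition d2 (g : vec2 -> R) (p : vec2) : R := Derive (fun s => g (fst p, s)) (snd p).

Definition C1 (g : vec2 -> R) : Prop :=
  (forall p : vec2, ex_derive (fun s => g (s, snd p)) (fst p) /\
                    ex_derive (fun s => g (fst p, s)) (snd p)) /\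
  (forall p : vec2, continuous g p /\ continuous (d1 g) p /\ continuous (d2 g) p).

Definition C2 (g : vec2 -> R) : Prop := C1 g /\ C1 (d1 g) /\ C1 (d2 g).

Definition C1v (v : vec2 -> vec2) : Prop := C1 (fun p => fst (v p)) /\ C1 (fun p => snd (v p)).
Definition C2v (v : vec2 -> vec2) : Prop := C2 (fun p => fst (v p)) /\ C2 (fun p => snd (v p)).

(* Compact support in the open unit disc D: the (closed) support is a compact
   subset of D, i.e. it is contained in a closed disc of radius r < 1. *)
Definition supp_in_D {T : Type} (zero : T) (g : vec2 -> T) : Prop :=
  exists r : R, r < 1 /\ forall p : vec2, r < vnorm p -> g p = zero.

Definition Cc2_D (phi : vec2 -> R) : Prop := C2 phi /\ supp_in_D 0 phi.
Definition Cc2v_D (f : vec2 -> vec2) : Prop := C2v f /\ supp_in_D (0, 0) f.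

Definition int_0_infty (h : R -> R) : R :=
  RInt_gen h (at_point 0) (Rbar_locally p_infty).

Definition L0 (u f : vec2 -> vec2) (x : vec2) : R :=
  - int_0_infty (fun t => vdot (u x) (f (vadd x (vscal t (u x))))).
Definition T0 (u f : vec2 -> vec2) (x : vec2) : R :=
  - int_0_infty (fun t => vdot (vperp (u x)) (f (vadd x (vscal t (u x))))).

(* A C^1 unit field whose forward rays are straight is constant. Being locally Lipschitz,
   it is also constant along backward rays (a continuation argument), so every full line
   [x + R u(x)] is an integral line; two non-parallel such lines would meet at a point where
   [u] takes both directions, hence [u y = +- u x], and continuity along the segment from [x]
   to [y] excludes the minus sign.
   With [u = a] constant, [L0 f] and [T0 f] are minus the ray transforms in direction [a] of
   [a.f] and [a^perp.f]. A continuous compactly supported [g] with vanishing ray transform is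
   zero: the integral of [g] over [[h, oo)] along the line through [x] vanishes for every [h],
   and differentiating in [h] gives [g x = 0]. Finally [a.f = 0] iff [f = (a^perp.f) a^perp],
   and [a^perp.f = 0] iff [f = (a.f) a]. *)

From Stdlib Require Import Reals Lra Psatz Classical FunctionalExtensionality.
From Coquelicot Require Import Coquelicot.
Open Scope R_scope.

Definition dist1 (x y : vec2) : R := Rabs (fst x - fst y) + Rabs (snd x - snd y).

Definition in_box (p : vec2) (d : R) (x : vec2) : Prop :=
  Rabs (fst x - fst p) < d /\ Rabs (snd x - snd p) < d.

Lemma vnorm_eq1_vdot (a : vec2) : vnorm a = 1 -> vdot a a = 1.
Proof.
  unfold vnorm. intro Ha.
  assert (Hpos : 0 <= vdot a a) by (unfold vdot; nra).
  rewrite <- (sqrt_sqrt _ Hpos), Ha. ring.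
Qed.

Lemma Rabs_mult_le_unit (t b : R) : Rabs b <= 1 -> Rabs (t * b) <= Rabs t.
Proof. intro Hb. rewrite Rabs_mult. pose proof (Rabs_pos t). nra. Qed.

Lemma vdot_eq1_coord_bound (a : vec2) : vdot a a = 1 -> Rabs (fst a) <= 1 /\ Rabs (snd a) <= 1.
Proof. unfold vdot. intro Ha. split; apply Rabs_le; nra. Qed.

Lemma vscal_coord_bound (t : R) (c : vec2) : vdot c c = 1 ->
  Rabs (fst (vscal t c)) <= Rabs t /\ Rabs (snd (vscal t c)) <= Rabs t.
Proof.
  intro Hc. destruct (vdot_eq1_coord_bound c Hc).
  split; apply Rabs_mult_le_unit; assumption.
Qed.

Lemma unit_vdot_eq1 (a b : vec2) : vdot a a = 1 -> vdot b b = 1 -> vdot a b = 1 -> b = a.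
Proof.
  intros Ha Hb Hab.
  assert (Hsq : (fst b - fst a) * (fst b - fst a) + (snd b - snd a) * (snd b - snd a) = 0).
  { replace 0 with (vdot b b + vdot a a - 2 * vdot a b) by (rewrite Ha, Hb, Hab; ring).
    unfold vdot; ring. }
  pose proof (Rle_0_sqr (fst b - fst a)). pose proof (Rle_0_sqr (snd b - snd a)).
  unfold Rsqr in *.
  apply injective_projections; apply Rminus_diag_uniq, Rsqr_0_uniq; unfold Rsqr; lra.
Qed.

Lemma dist1_nonneg (x y : vec2) : 0 <= dist1 x y.
Proof. unfold dist1. pose proof (Rabs_pos (fst x - fst y)). pose proof (Rabs_pos (snd x - snd y)). lra. Qed.

Lemma dist1_eq0 (x y : vec2) : dist1 x y = 0 -> x = y.
Proof.
  unfold dist1. intro H.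
  pose proof (Rabs_pos (fst x - fst y)). pose proof (Rabs_pos (snd x - snd y)).
  apply injective_projections; apply Rminus_diag_uniq, Rabs_eq_0; lra.
Qed.

Lemma in_box_le (p x : vec2) (d d' : R) : in_box p d x -> d <= d' -> in_box p d' x.
Proof. intros [H1 H2] Hd. split; lra. Qed.

Lemma in_box_vadd (p x v : vec2) (e k : R) : in_box p e x ->
  Rabs (fst v) <= k -> Rabs (snd v) <= k -> in_box p (e + k) (vadd x v).
Proof.
  intros [H1 H2] Hv1 Hv2. unfold vadd; split; simpl.
  - replace (fst x + fst v - fst p) with ((fst x - fst p) + fst v) by ring.
    pose proof (Rabs_triang (fst x - fst p) (fst v)). lra.
  - replace (snd x + snd v - snd p) with ((snd x - snd p) + snd v) by ring.
    pose proof (Rabs_triang (snd x - snd p) (snd v)). lra.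
Qed.

Lemma in_box_line (x a : vec2) (t0 t e : R) : vdot a a = 1 -> Rabs (t - t0) < e ->
  in_box (vadd x (vscal t0 a)) e (vadd x (vscal t a)).
Proof.
  intros Ha Ht. destruct (vscal_coord_bound (t - t0) a Ha) as [H1 H2].
  unfold in_box, vadd, vscal in *; simpl in *; split.
  - replace (fst x + t * fst a - (fst x + t0 * fst a)) with ((t - t0) * fst a) by ring. lra.
  - replace (snd x + t * snd a - (snd x + t0 * snd a)) with ((t - t0) * snd a) by ring. lra.
Qed.

Lemma Rabs_sub_lt_between (a b c s d : R) : Rabs (a - c) < d -> Rabs (b - c) < d ->
  Rmin a b <= s <= Rmax a b -> Rabs (s - c) < d.
Proof.
  intros Ha Hb. apply Rabs_def2 in Ha. apply Rabs_def2 in Hb.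
  unfold Rmin, Rmax. destruct (Rle_dec a b); intro Hs; apply Rabs_def1; lra.
Qed.

Lemma Rabs_sub_le_of_Derive_bound (k : R -> R) (x y M : R) :
  (forall s, Rmin x y <= s <= Rmax x y -> ex_derive k s /\ Rabs (Derive k s) <= M) ->
  Rabs (k x - k y) <= M * Rabs (x - y).
Proof.
  intro Hk. rewrite Rmin_comm, Rmax_comm in Hk.
  destruct (MVT_gen k y x (Derive k)) as [c [Hc Hkc]].
  - intros s Hs. apply Derive_correct, Hk. lra.
  - intros s Hs. apply continuity_pt_filterlim.
    apply (@ex_derive_continuous R_AbsRing R_NormedModule), Hk, Hs.
  - simpl in Hkc. rewrite Hkc, Rabs_mult.
    apply Rmult_le_compat_r; [apply Rabs_pos | apply Hk, Hc].
Qed.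

Lemma continuous_bounded_on_box (h : vec2 -> R) (p : vec2) : continuous h p ->
  exists d M, 0 < d /\ 0 <= M /\ forall z, in_box p d z -> Rabs (h z) <= M.
Proof.
  intro Hc.
  destruct (proj1 (filterlim_locally _ _) Hc (mkposreal 1 Rlt_0_1)) as [e He].
  exists e, (Rabs (h p) + 1).
  split; [apply cond_pos | split; [pose proof (Rabs_pos (h p)); lra |]].
  intros z [Hz1 Hz2].
  assert (Hb : Rabs (h z - h p) < 1) by (apply He; split; assumption).
  pose proof (Rabs_triang_inv (h z) (h p)). lra.
Qed.

Lemma C1_lipschitz_on_box (g : vec2 -> R) (p : vec2) : C1 g ->
  exists d M, 0 < d /\ 0 <= M /\ forall x y, in_box p d x -> in_box p d y ->
    Rabs (g x - g y) <= M * dist1 x y.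
Proof.
  intros [Hder Hcont]. destruct (Hcont p) as [_ [Hc1 Hc2]].
  destruct (continuous_bounded_on_box _ p Hc1) as [da [Ma [Hda [HMa Ba]]]].
  destruct (continuous_bounded_on_box _ p Hc2) as [db [Mb [Hdb [HMb Bb]]]].
  set (d := Rmin da db). set (M := Rmax Ma Mb).
  assert (Hd : d <= da /\ d <= db) by (split; [apply Rmin_l | apply Rmin_r]).
  assert (HM : Ma <= M /\ Mb <= M) by (split; [apply Rmax_l | apply Rmax_r]).
  exists d, M. split; [apply Rmin_pos; assumption | split; [lra |]].
  intros [x1 x2] [y1 y2] [Hx1 Hx2] [Hy1 Hy2]; unfold dist1; simpl in *.
  assert (Hfst : Rabs (g (x1, x2) - g (y1, x2)) <= M * Rabs (x1 - y1)).
  { apply (Rabs_sub_le_of_Derive_bound (fun s => g (s, x2))). intros s Hs.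
    split; [exact (proj1 (Hder (s, x2))) |].
    apply Rle_trans with Ma; [| lra].
    apply (Ba (s, x2)). split; simpl; [| lra].
    apply (Rabs_sub_lt_between x1 y1); [lra | lra | exact Hs]. }
  assert (Hsnd : Rabs (g (y1, x2) - g (y1, y2)) <= M * Rabs (x2 - y2)).
  { apply (Rabs_sub_le_of_Derive_bound (fun s => g (y1, s))). intros s Hs.
    split; [exact (proj2 (Hder (y1, s))) |].
    apply Rle_trans with Mb; [| lra].
    apply (Bb (y1, s)). split; simpl; [lra |].
    apply (Rabs_sub_lt_between x2 y2); [lra | lra | exact Hs]. }
  pose proof (Rabs_triang (g (x1, x2) - g (y1, x2)) (g (y1, x2) - g (y1, y2))).
  replace (g (x1, x2) - g (y1, y2))
    with (g (x1, x2) - g (y1, x2) + (g (y1, x2) - g (y1, y2))) by ring.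
  lra.
Qed.

Lemma C1v_lipschitz_on_box (u : vec2 -> vec2) (p : vec2) : C1v u ->
  exists d M, 0 < d /\ 0 <= M /\ forall x y, in_box p d x -> in_box p d y ->
    dist1 (u x) (u y) <= M * dist1 x y.
Proof.
  intros [H1 H2].
  destruct (C1_lipschitz_on_box _ p H1) as [da [Ma [Hda [HMa La]]]].
  destruct (C1_lipschitz_on_box _ p H2) as [db [Mb [Hdb [HMb Lb]]]].
  assert (Hd : Rmin da db <= da /\ Rmin da db <= db) by (split; [apply Rmin_l | apply Rmin_r]).
  exists (Rmin da db), (Ma + Mb). split; [apply Rmin_pos; assumption | split; [lra |]].
  intros x y Hx Hy.
  pose proof (La x y (in_box_le _ _ _ _ Hx (proj1 Hd)) (in_box_le _ _ _ _ Hy (proj1 Hd))).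
  pose proof (Lb x y (in_box_le _ _ _ _ Hx (proj2 Hd)) (in_box_le _ _ _ _ Hy (proj2 Hd))).
  unfold dist1 at 1. lra.
Qed.

Lemma continuous_lincomb (al be : R) (g h : vec2 -> R) (p : vec2) :
  continuous g p -> continuous h p -> continuous (fun q => al * g q + be * h q) p.
Proof.
  intros Hg Hh.
  apply (continuous_plus (V := R_NormedModule) (fun q => al * g q) (fun q => be * h q));
    apply (continuous_scal_r (V := R_NormedModule)); assumption.
Qed.

Lemma d1_lincomb (al be : R) (g h : vec2 -> R) : C1 g -> C1 h ->
  d1 (fun q => al * g q + be * h q) = (fun q => al * d1 g q + be * d1 h q).
Proof.
  intros [Dg _] [Dh _]. apply functional_extensionality. intro p. unfold d1.
  rewrite Derive_plus, !Derive_scal; [reflexivity | |];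
    apply ex_derive_scal; [apply Dg | apply Dh].
Qed.

Lemma d2_lincomb (al be : R) (g h : vec2 -> R) : C1 g -> C1 h ->
  d2 (fun q => al * g q + be * h q) = (fun q => al * d2 g q + be * d2 h q).
Proof.
  intros [Dg _] [Dh _]. apply functional_extensionality. intro p. unfold d2.
  rewrite Derive_plus, !Derive_scal; [reflexivity | |];
    apply ex_derive_scal; [apply Dg | apply Dh].
Qed.

Lemma C1_lincomb (al be : R) (g h : vec2 -> R) : C1 g -> C1 h ->
  C1 (fun q => al * g q + be * h q).
Proof.
  intros Hg Hh.
  split.
  - intro p. destruct Hg as [Dg _], Hh as [Dh _]. split.
    + apply (ex_derive_plus (fun s => al * g (s, snd p)) (fun s => be * h (s, snd p)));
        apply ex_derive_scal; [apply Dg | apply Dh].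
    + apply (ex_derive_plus (fun s => al * g (fst p, s)) (fun s => be * h (fst p, s)));
        apply ex_derive_scal; [apply Dg | apply Dh].
  - intro p. rewrite (d1_lincomb al be g h Hg Hh), (d2_lincomb al be g h Hg Hh).
    destruct Hg as [_ Cg], Hh as [_ Ch].
    destruct (Cg p) as [? [? ?]], (Ch p) as [? [? ?]].
    split; [| split]; apply continuous_lincomb; assumption.
Qed.

Lemma C2_lincomb (al be : R) (g h : vec2 -> R) : C2 g -> C2 h ->
  C2 (fun q => al * g q + be * h q).
Proof.
  intros [Hg [Hg1 Hg2]] [Hh [Hh1 Hh2]].
  split; [apply C1_lincomb; assumption |].
  rewrite (d1_lincomb al be g h Hg Hh), (d2_lincomb al be g h Hg Hh).
  split; apply C1_lincomb; assumption.
Qed.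

Lemma Cc2_D_vdot (c : vec2) (f : vec2 -> vec2) : Cc2v_D f -> Cc2_D (fun p => vdot c (f p)).
Proof.
  intros [[Hf1 Hf2] [r [Hr Hsupp]]]. split.
  - exact (C2_lincomb (fst c) (snd c) _ _ Hf1 Hf2).
  - exists r. split; [exact Hr |]. intros p Hp. rewrite (Hsupp p Hp). unfold vdot; simpl; ring.
Qed.

Lemma continuous_along_line (g : vec2 -> R) (x v : vec2) (l : R) :
  (forall p, continuous g p) -> continuous (fun t => g (vadd x (vscal t v))) l.
Proof.
  intro Hg.
  apply (continuous_comp_2 (fun t => fst x + t * fst v) (fun t => snd x + t * snd v)
           (fun p q => g (p, q)));
    [apply (@ex_derive_continuous R_AbsRing R_NormedModule); auto_derive; trivial ..|].
  apply (continuous_ext g). intros [p q]; reflexivity. apply Hg.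
Qed.

Lemma small_step_exists (d M : R) : 0 < d -> 0 <= M -> exists h, 0 < h <= d / 4 /\ M * h < 1.
Proof.
  intros Hd HM. exists (Rmin (d / 4) (/ (M + 1))).
  assert (Hinv : 0 < / (M + 1)) by (apply Rinv_0_lt_compat; lra).
  assert (HMinv : M * / (M + 1) < 1)
    by (apply (Rmult_lt_reg_r (M + 1)); [lra | field_simplify; lra]).
  pose proof (Rmin_r (d / 4) (/ (M + 1))).
  split; [split; [apply Rmin_pos; lra | apply Rmin_l] | nra].
Qed.

Section Straight_unit_field.

Variable u : vec2 -> vec2.
Hypothesis hu_C1 : C1v u.
Hypothesis hu_unit : forall x : vec2, vnorm (u x) = 1.
Hypothesis hu_lines : forall (x : vec2) (t : R), 0 <= t -> u (vadd x (vscal t (u x))) = u x.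

(* The forward ray from [q' := q - h u q] reaches [q' + h c], with [c := u q'], and
   [(q' + h c) - q = h (c - u q)]; so Lipschitz continuity gives [|c - u q| <= M h |c - u q|]. *)
Lemma straight_ray_backward_step (p q : vec2) (d M h : R) :
  (forall x y, in_box p d x -> in_box p d y -> dist1 (u x) (u y) <= M * dist1 x y) ->
  0 <= M -> in_box p (d / 2) q -> 0 <= h <= d / 4 -> M * h < 1 ->
  u (vadd q (vscal (- h) (u q))) = u q.
Proof.
  intros Hlip HM Hq Hh HMh.
  set (a := u q). set (q' := vadd q (vscal (- h) a)). set (c := u q').
  assert (Ha : vdot a a = 1) by apply vnorm_eq1_vdot, hu_unit.
  assert (Hc : vdot c c = 1) by apply vnorm_eq1_vdot, hu_unit.
  assert (Hend : u (vadd q' (vscal h c)) = c) by (apply hu_lines; lra).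
  assert (Hq' : in_box p (d / 2 + h) q').
  { destruct (vscal_coord_bound (- h) a Ha).
    replace (Rabs (- h)) with h in * by (rewrite Rabs_Ropp, Rabs_pos_eq; lra).
    apply in_box_vadd; assumption. }
  assert (Hin : in_box p d (vadd q' (vscal h c))).
  { destruct (vscal_coord_bound h c Hc).
    replace (Rabs h) with h in * by (rewrite Rabs_pos_eq; lra).
    apply in_box_le with (d / 2 + h + h); [apply in_box_vadd |]; (assumption || lra). }
  assert (Hdist : dist1 (vadd q' (vscal h c)) q = h * dist1 c a).
  { unfold dist1, q', vadd, vscal; simpl.
    replace (fst q + - h * fst a + h * fst c - fst q) with (h * (fst c - fst a)) by ring.
    replace (snd q + - h * snd a + h * snd c - snd q) with (h * (snd c - snd a)) by ring.
    rewrite !Rabs_mult, Rabs_pos_eq by lra. ring. }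
  assert (Hq_box : in_box p d q) by (apply in_box_le with (d / 2); [exact Hq | lra]).
  pose proof (Hlip _ _ Hin Hq_box) as Hle.
  rewrite Hend, Hdist in Hle. fold a in Hle.
  pose proof (dist1_nonneg c a).
  apply dist1_eq0. nra.
Qed.

Lemma straight_ray_backward (x : vec2) (s : R) : 0 <= s -> u (vadd x (vscal (- s) (u x))) = u x.
Proof.
  intro Hs. set (a := u x). set (P := fun t => vadd x (vscal (- t) a)). change (u (P s) = a).
  assert (Ha : vdot a a = 1) by apply vnorm_eq1_vdot, hu_unit.
  set (E := fun t => 0 <= t <= s /\ forall t', 0 <= t' <= t -> u (P t') = a).
  assert (HE0 : E 0).
  { split; [lra |]. intros t' Ht'. replace t' with 0 by lra.
    replace (P 0) with x; [reflexivity |].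
    unfold P, vadd, vscal. apply injective_projections; simpl; ring. }
  (* From just below the supremum [m], one step of [straight_ray_backward_step]
     with a uniform size [h] passes beyond [m]. *)
  destruct (completeness E) as [m [Hub Hlub]].
  { exists s. intros t Ht. apply Ht. }
  { exists 0. exact HE0. }
  assert (Hm : 0 <= m <= s) by (split; [apply Hub, HE0 | apply Hlub; intros t Ht; apply Ht]).
  destruct (C1v_lipschitz_on_box u (P m) hu_C1) as [d [M [Hd [HM Hlip]]]].
  destruct (small_step_exists d M Hd HM) as [h [Hh HMh]].
  assert (Hs0 : exists s0, E s0 /\ m - h < s0).
  { apply NNPP. intro Hno. assert (m <= m - h); [| lra].
    apply Hlub. intros t Et. apply Rnot_lt_le. intro Ht. apply Hno. exists t. split; assumption. }
  destruct Hs0 as [s0 [[Hs0 Hall] Hs0m]].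
  assert (Hs0m' : s0 <= m) by (apply Hub; split; assumption).
  assert (Hq0 : u (P s0) = a) by (apply Hall; lra).
  assert (Hext : forall t', 0 <= t' <= s0 + h -> u (P t') = a).
  { intros t' Ht'. destruct (Rle_lt_dec t' s0); [apply Hall; lra |].
    rewrite <- Hq0.
    replace (P t') with (vadd (P s0) (vscal (- (t' - s0)) (u (P s0)))).
    - apply (straight_ray_backward_step (P m) (P s0) d M); try lra; [exact Hlip | | nra].
      apply in_box_line; [exact Ha | rewrite Rabs_minus_sym; apply Rabs_def1; lra].
    - rewrite Hq0. unfold P, vadd, vscal. apply injective_projections; simpl; ring. }
  destruct (Rle_lt_dec (s0 + h) s).
  - assert (E (s0 + h)) by (split; [lra | exact Hext]).
    assert (s0 + h <= m) by (apply Hub; assumption). lra.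
  - apply Hext. lra.
Qed.

Lemma straight_line (x : vec2) (t : R) : u (vadd x (vscal t (u x))) = u x.
Proof.
  destruct (Rle_lt_dec 0 t); [apply hu_lines; assumption |].
  replace t with (- (- t)) by ring. apply straight_ray_backward. lra.
Qed.

Lemma straight_lines_parallel (x y : vec2) :
  fst (u x) * snd (u y) - snd (u x) * fst (u y) = 0.
Proof.
  set (a := u x). set (b := u y). set (cr := fst a * snd b - snd a * fst b).
  destruct (Req_dec cr 0) as [| Hcr]; [assumption | exfalso].
  (* Non-parallel lines through [x] and [y] meet, and [u] would equal both [a] and [b] there. *)
  set (t := ((fst y - fst x) * snd b - fst b * (snd y - snd x)) / cr).
  set (s := (snd a * (fst y - fst x) - fst a * (snd y - snd x)) / cr).
  assert (Hmeet : vadd x (vscal t a) = vadd y (vscal s b)).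
  { unfold vadd, vscal, t, s, cr in *. apply injective_projections; simpl; field; exact Hcr. }
  pose proof (straight_line x t) as Hx. pose proof (straight_line y s) as Hy.
  fold a b in Hx, Hy. rewrite Hmeet, Hy in Hx.
  apply Hcr. unfold cr. rewrite Hx. ring.
Qed.

Lemma straight_unit_field_constant (x y : vec2) : u y = u x.
Proof.
  destruct hu_C1 as [[_ Hu1] [_ Hu2]].
  set (a := u x). set (z := fun l => vadd x (vscal l (vadd y (vscal (-1) x)))).
  set (g := fun l => vdot a (u (z l))).
  assert (Ha : vdot a a = 1) by apply vnorm_eq1_vdot, hu_unit.
  assert (Hg_sq : forall l, g l * g l = 1).
  { intro l. pose proof (straight_lines_parallel x (z l)) as Hpar. fold a in Hpar.
    pose proof (vnorm_eq1_vdot _ (hu_unit (z l))) as Hb. unfold g, vdot in *. nra. }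
  assert (Hg_cont : continuity g).
  { intro l. apply continuity_pt_filterlim.
    apply (continuous_along_line (fun p => vdot a (u p))). intro p. apply continuous_lincomb; [apply Hu1 | apply Hu2]. }
  assert (Hz0 : z 0 = x) by (unfold z, vadd, vscal; apply injective_projections; simpl; ring).
  assert (Hz1 : z 1 = y) by (unfold z, vadd, vscal; apply injective_projections; simpl; ring).
  assert (Hg0 : g 0 = 1) by (unfold g; rewrite Hz0; exact Ha).
  assert (Hg1 : g 1 = 1).
  { destruct (Rlt_le_dec (g 1) 0) as [Hneg | Hpos].
    - destruct (IVT_cor g 0 1 Hg_cont) as [l [_ Hl]]; [lra | rewrite Hg0; lra |].
      pose proof (Hg_sq l) as Hl2. rewrite Hl in Hl2. lra.
    - pose proof (Hg_sq 1). nra. }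
  apply unit_vdot_eq1; [exact Ha | apply vnorm_eq1_vdot, hu_unit |].
  unfold g in Hg1. rewrite Hz1 in Hg1. exact Hg1.
Qed.

End Straight_unit_field.

Lemma is_RInt_gen_zero_pinfty (B : R) :
  is_RInt_gen (fun _ : R => 0) (at_point B) (Rbar_locally p_infty) 0.
Proof.
  apply filterlimi_locally. intro eps.
  exists (fun _ => True) (fun _ => True); [exact I | exists 0; intros; exact I |].
  intros a b _ _. exists (scal (b - a) 0). split; [apply (@is_RInt_const R_NormedModule) |].
  replace (scal (b - a) 0) with 0; [apply ball_center |].
  unfold scal; simpl; unfold mult; simpl; ring.
Qed.

Lemma int_0_infty_eq_RInt (G : R -> R) (B : R) :
  (forall t, continuous G t) -> (forall t, B < t -> G t = 0) -> int_0_infty G = RInt G 0 B.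
Proof.
  intros HG HB. unfold int_0_infty. apply is_RInt_gen_unique.
  replace (RInt G 0 B) with (plus (RInt G 0 B) 0) by (unfold plus; simpl; ring).
  apply (is_RInt_gen_Chasles (V := R_NormedModule)) with (b := B).
  - apply is_RInt_gen_at_point, (RInt_correct (V := R_CompleteNormedModule)).
    apply ex_RInt_continuous. intros; apply HG.
  - apply is_RInt_gen_ext with (fun _ => 0); [| apply is_RInt_gen_zero_pinfty].
    exists (fun a => a = B) (fun b => B < b); [reflexivity | exists B; auto |].
    intros a b Ha Hb t Ht. simpl in Ht. subst a. symmetry. apply HB.
    unfold Rmin in Ht. destruct (Rle_dec B b); lra.
Qed.

Lemma int_0_infty_zero : int_0_infty (fun _ => 0) = 0.
Proof.
  rewrite (int_0_infty_eq_RInt _ 0); [apply (RInt_point (V := R_CompleteNormedModule)) | |].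
  - intro; apply continuous_const.
  - reflexivity.
Qed.

Lemma int_0_infty_shift (G : R -> R) (C h : R) :
  (forall t, continuous G t) -> (forall t, C < t -> G t = 0) ->
  int_0_infty (fun t => G (t + h)) = RInt G h C.
Proof.
  intros HG HC.
  rewrite (int_0_infty_eq_RInt _ (C - h)).
  - rewrite (RInt_ext _ (fun t => scal 1 (G (1 * t + h)))).
    + rewrite (RInt_comp_lin (V := R_CompleteNormedModule)). f_equal; ring.
      apply ex_RInt_continuous. intros; apply HG.
    + intros t _. unfold scal; simpl; unfold mult; simpl. rewrite !Rmult_1_l. reflexivity.
  - intro t. apply (continuous_comp (fun t => t + h) G); [| apply HG].
    apply (@ex_derive_continuous R_AbsRing R_NormedModule). auto_derive. trivial.
  - intros t Ht. apply HC. lra.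
Qed.

(* [h |-> RInt G h C] vanishes near [h0], so its derivative [- G h0] vanishes too. *)
Lemma eq0_of_RInt_lower_eq0 (G : R -> R) (C h0 : R) :
  (forall t, continuous G t) -> h0 < C -> (forall h, h < C -> RInt G h C = 0) -> G h0 = 0.
Proof.
  intros HG Hh0 H0.
  assert (Hder : is_derive (fun h => RInt G h C) h0 (opp (G h0))).
  { apply (is_derive_RInt' (V := R_NormedModule) G _ h0 C); [| apply HG].
    apply filter_forall. intro h. apply (RInt_correct (V := R_CompleteNormedModule)).
    apply ex_RInt_continuous. intros; apply HG. }
  assert (Hder0 : is_derive (fun h => RInt G h C) h0 0).
  { apply (is_derive_ext_loc (fun _ => 0)); [| apply (is_derive_const (K := R_AbsRing) 0 h0)].
    apply (filter_imp (fun h => h < C)); [intros h Hh; symmetry; apply H0, Hh |].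
    apply open_lt, Hh0. }
  pose proof (is_derive_unique _ _ _ Hder) as E1. rewrite (is_derive_unique _ _ _ Hder0) in E1.
  unfold opp in E1; simpl in E1. lra.
Qed.

Lemma vnorm_gt1_far (a y : vec2) (t : R) : vdot a a = 1 ->
  2 * (Rabs (fst y) + Rabs (snd y)) + 2 < t -> 1 < vnorm (vadd y (vscal t a)).
Proof.
  intros Ha Ht. set (K := Rabs (fst y) + Rabs (snd y)) in *.
  destruct (vdot_eq1_coord_bound a Ha) as [Ha1 Ha2].
  assert (HK : Rabs (vdot y a) <= K).
  { unfold vdot, K. eapply Rle_trans; [apply Rabs_triang |].
    rewrite !Rabs_mult. pose proof (Rabs_pos (fst y)). pose proof (Rabs_pos (snd y)). nra. }
  assert (HyaK : - K <= vdot y a) by (apply Rabs_le_between in HK; lra).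
  assert (Hexp : vdot (vadd y (vscal t a)) (vadd y (vscal t a))
                 = vdot y y + 2 * t * vdot y a + t * t * vdot a a)
    by (unfold vdot, vadd, vscal; simpl; ring).
  assert (Hyy : 0 <= vdot y y) by (unfold vdot; nra).
  assert (0 <= K) by (unfold K; pose proof (Rabs_pos (fst y)); pose proof (Rabs_pos (snd y)); lra).
  assert (Ht2 : 2 < t /\ 2 < t - 2 * K) by lra.
  assert (Hprod : 1 < t * (t - 2 * K)) by nra.
  assert (Hcross : - 2 * t * K <= 2 * t * vdot y a) by nra.
  unfold vnorm. rewrite <- sqrt_1. apply sqrt_lt_1; rewrite ?Hexp, ?Ha; lra.
Qed.

Lemma ray_transform_eq0_iff (g : vec2 -> R) (a : vec2) :
  (forall p, continuous g p) -> supp_in_D 0 g -> vdot a a = 1 ->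
  (forall x, int_0_infty (fun t => g (vadd x (vscal t a))) = 0) <-> (forall x, g x = 0).
Proof.
  intros Hg [r [Hr Hsupp]] Ha. split.
  - intros Hray x.
    set (G := fun t => g (vadd x (vscal t a))).
    set (C := 2 * (Rabs (fst x) + Rabs (snd x)) + 2).
    assert (HG : forall t, continuous G t) by (intro t; apply continuous_along_line, Hg).
    assert (HC : forall t, C < t -> G t = 0)
      by (intros t Ht; apply Hsupp; pose proof (vnorm_gt1_far a x t Ha Ht); lra).
    assert (HG0 : G 0 = 0).
    { apply (eq0_of_RInt_lower_eq0 G C); [exact HG | unfold C; pose proof (Rabs_pos (fst x));
        pose proof (Rabs_pos (snd x)); lra |].
      intros h _. rewrite <- (int_0_infty_shift G C h HG HC).
      rewrite <- (Hray (vadd x (vscal h a))). f_equal. apply functional_extensionality. intro t.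
      unfold G. f_equal. unfold vadd, vscal; apply injective_projections; simpl; ring. }
    unfold G in HG0. replace (vadd x (vscal 0 a)) with x in HG0; [exact HG0 |].
    unfold vadd, vscal; apply injective_projections; simpl; ring.
  - intros H0 x. rewrite <- int_0_infty_zero. f_equal.
    apply functional_extensionality. intro t. apply H0.
Qed.

Lemma vperp_decomposition (a v : vec2) : vdot a a = 1 ->
  v = vadd (vscal (vdot a v) a) (vscal (vdot (vperp a) v) (vperp a)).
Proof.
  unfold vdot, vadd, vscal, vperp; simpl. intro Ha.
  apply injective_projections; simpl.
  - transitivity (fst v * (fst a * fst a + snd a * snd a)); [rewrite Ha |]; ring.
  - transitivity (snd v * (fst a * fst a + snd a * snd a)); [rewrite Ha |]; ring.
Qed.

Lemma vadd_comm (v w : vec2) : vadd v w = vadd w v.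
Proof. unfold vadd. apply injective_projections; simpl; ring. Qed.

Lemma vdot_vperp_r (a : vec2) : vdot a (vperp a) = 0.
Proof. unfold vdot, vperp; simpl; ring. Qed.

Lemma vdot_vperp_l (a : vec2) : vdot (vperp a) a = 0.
Proof. unfold vdot, vperp; simpl; ring. Qed.

(* The reconstruction hypothesis says that [(e, w)] is an orthonormal basis. *)
Lemma vanishing_component_iff (e w : vec2) (f : vec2 -> vec2) :
  vdot e w = 0 -> (forall v, v = vadd (vscal (vdot e v) e) (vscal (vdot w v) w)) -> Cc2v_D f ->
  (forall x, vdot e (f x) = 0) <-> exists phi, Cc2_D phi /\ forall x, f x = vscal (phi x) w.
Proof.
  intros Hew Hbasis Hf. split.
  - intro He. exists (fun p => vdot w (f p)). split; [apply Cc2_D_vdot, Hf |].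
    intro x. rewrite (Hbasis (f x)) at 1. rewrite He.
    unfold vadd, vscal; apply injective_projections; simpl; ring.
  - intros [phi [_ Hphi]] x. rewrite Hphi.
    unfold vdot, vscal in *; simpl.
    transitivity (phi x * (fst e * fst w + snd e * snd w)); [ring | rewrite Hew; ring].
Qed.

Lemma L0_constant_direction (u f : vec2 -> vec2) (a x : vec2) : (forall y, u y = a) ->
  L0 u f x = - int_0_infty (fun t => vdot a (f (vadd x (vscal t a)))).
Proof. intro Hu. unfold L0. rewrite Hu. reflexivity. Qed.

Lemma T0_constant_direction (u f : vec2 -> vec2) (a x : vec2) : (forall y, u y = a) ->
  T0 u f x = - int_0_infty (fun t => vdot (vperp a) (f (vadd x (vscal t a)))).
Proof. intro Hu. unfold T0. rewrite Hu. reflexivity. Qed.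

Theorem theorem4p2 (u : vec2 -> vec2)
  (hu_C1 : C1v u)
  (hu_unit : forall x : vec2, vnorm (u x) = 1)
  (hu_lines : forall (x : vec2) (t : R), 0 <= t -> u (vadd x (vscal t (u x))) = u x)
  (f : vec2 -> vec2) (hf : Cc2v_D f) :
  ((forall x : vec2, L0 u f x = 0) <->
     exists phi : vec2 -> R, Cc2_D phi /\ forall x : vec2, f x = vscal (phi x) (vperp (u x)))
  /\
  ((forall x : vec2, T0 u f x = 0) <->
     exists phi : vec2 -> R, Cc2_D phi /\ forall x : vec2, f x = vscal (phi x) (u x)).
Proof.
  assert (Hconst : exists a, vdot a a = 1 /\ forall y, u y = a).
  { exists (u (0, 0)). split; [apply vnorm_eq1_vdot, hu_unit |].
    intro y. apply straight_unit_field_constant; assumption. }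
  destruct Hconst as [a [Ha Hu]].
  assert (Hray : forall c, (forall x, - int_0_infty (fun t => vdot c (f (vadd x (vscal t a)))) = 0)
                           <-> (forall x, vdot c (f x) = 0)).
  { intro c. destruct (Cc2_D_vdot c f hf) as [[[_ Hcont] _] Hsupp].
    rewrite <- (ray_transform_eq0_iff (fun p => vdot c (f p)) a (fun p => proj1 (Hcont p)) Hsupp Ha).
    split; intros H x; specialize (H x); lra. }
  assert (HL : (forall x, L0 u f x = 0) <-> (forall x, vdot a (f x) = 0)).
  { rewrite <- Hray. split; intros H x; specialize (H x);
      rewrite (L0_constant_direction u f a x Hu) in *; exact H. }
  assert (HT : (forall x, T0 u f x = 0) <-> (forall x, vdot (vperp a) (f x) = 0)).
  { rewrite <- Hray. split; intros H x; specialize (H x);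
      rewrite (T0_constant_direction u f a x Hu) in *; exact H. }
  rewrite HL, HT. setoid_rewrite Hu.
  split; apply vanishing_component_iff; try assumption.
  - apply vdot_vperp_r.
  - intro v. apply vperp_decomposition, Ha.
  - apply vdot_vperp_l.
  - intro v. rewrite vadd_comm. apply vperp_decomposition, Ha.
Qed.
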